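(* Let $(a_m)_{m\ge1}$ be defined by $a_1=2$ and $a_{m+1}=a_m+1/a_m$, so that $[-a_m,a_m]$ is the support of the $m$-fold monotone convolution of the standard semicircle law. Then for every $m\ge3$ $$\sqrt{m+\sqrt{m(m+1)}}\;\le\; a_m\;\le\;\sqrt{2m+\sqrt{2m}}.$$
   Context: The standard semicircle law is $\frac1{2\pi}\sqrt{4-x^2}\mathbf 1_{[-2,2]}dx$; monotone convolution $\mu\rhd\nu$ is the probability measure $\rho$ with $H_\rho=H_\mu\circ H_\nu$ where $H_\mu=1/\mathcal G_\mu$ and $\mathcal G_\mu(z)=\int\frac{\mu(dx)}{z-x}$. *)

From Stdlib Require Import Reals.
Open Scope R_scope.

(* The sequence a_m (m >= 1): a_1 = 2, a_{m+1} = a_m + 1/a_m.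
   Indexing is by m itself; the value at index 0 is an unused placeholder (2). *)
Fixpoint a_seq (m : nat) : R :=
  match m with
  | O => 2
  | S O => 2
  | S ((S _) as k) => a_seq k + / a_seq k
  end.

From Stdlib Require Import Reals Lra Psatz.
Open Scope R_scope.

(* The squares b_m = a_m^2 obey b_{m+1} = b_m + 2 + 1/b_m, a map that is
   nondecreasing on [1, +oo).  The functions M + sqrt (M (M+1)) and
   2M + sqrt (2M) are a sub- and a supersolution of this recursion in the
   continuous variable M, and they enclose b_3 = 8.41; by monotonicity of the
   map the enclosure propagates to every m >= 3.  Taking square roots gives
   the theorem. *)

Definition sqr_step (x : R) : R := x + 2 + / x.

Definition sqr_lower (M : R) : R := M + sqrt (M * (M + 1)).

Definition sqr_upper (M : R) : R := 2 * M + sqrt (2 * M).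

Lemma sqr_step_le x y : 1 <= x -> x <= y -> sqr_step x <= sqr_step y.
Proof.
  intros Hx Hxy; unfold sqr_step.
  assert (Hdiff : y + 2 + / y - (x + 2 + / x) = (y - x) * (1 - / (x * y)))
    by (field; lra).
  assert (/ (x * y) <= 1) by (rewrite <- Rinv_1; apply Rinv_le_contravar; nra).
  nra.
Qed.

Lemma sqr_lower_sub M : 0 < M -> sqr_lower (M + 1) <= sqr_step (sqr_lower M).
Proof.
  intro HM; unfold sqr_lower, sqr_step.
  set (s := sqrt (M * (M + 1))).
  set (r := sqrt ((M + 1) * (M + 1 + 1))).
  assert (Hs2 : s * s = M * (M + 1)) by (apply sqrt_sqrt; nra).
  assert (Hr2 : r * r = (M + 1) * (M + 1 + 1)) by (apply sqrt_sqrt; nra).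
  pose proof (sqrt_pos (M * (M + 1))) as Hs0.
  pose proof (sqrt_pos ((M + 1) * (M + 1 + 1))) as Hr0.
  fold s in Hs0; fold r in Hr0.
  assert (HMs : M <= s) by nra.
  assert (Hr : r <= M + 3 / 2) by nra.
  set (u := / (M + s)).
  assert (Hu : u * (M + s) = 1) by (unfold u; field; lra).
  assert (Hu0 : 0 < u) by (unfold u; apply Rinv_0_lt_compat; lra).
  (* s lies below M + 1/2 by exactly 1 / (4 (s + M + 1/2)), which u dominates *)
  assert (Hgap : (s - M - 1 / 2) * (s + M + 1 / 2) = - 1 / 4) by nra.
  assert (s + u >= M + 1 / 2) by nra.
  lra.
Qed.

Lemma sqr_upper_super M :
  1 / 2 <= M -> sqr_step (sqr_upper M) <= sqr_upper (M + 1).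
Proof.
  intro HM; unfold sqr_upper, sqr_step.
  set (x := sqrt (2 * M)).
  assert (Hx2 : x * x = 2 * M) by (apply sqrt_sqrt; lra).
  assert (Hx0 : 0 <= x) by apply sqrt_pos.
  assert (Hx1 : 1 <= x) by nra.
  replace (2 * (M + 1)) with (x * x + 2) by lra.
  replace (2 * M) with (x * x) by lra.
  set (t := / (x * x + x)).
  assert (Ht : t * (x * x + x) = 1) by (unfold t; field; nra).
  assert (Ht0 : 0 < t) by (unfold t; apply Rinv_0_lt_compat; nra).
  assert (Hxt : x * t <= 1 / 2) by nra.
  assert (Htt : t <= 1 / 2) by nra.
  assert (x + t <= sqrt (x * x + 2)).
  { rewrite <- (sqrt_pow2 (x + t)) by lra. apply sqrt_le_1_alt. nra. }
  lra.
Qed.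

Section Comparison.

Variables (f : R -> R) (b lo hi : nat -> R) (n0 : nat).

Hypothesis f_mono : forall x y, 1 <= x -> x <= y -> f x <= f y.
Hypothesis b_rec : forall n, (n0 <= n)%nat -> b (S n) = f (b n).
Hypothesis lo_sub : forall n, (n0 <= n)%nat -> lo (S n) <= f (lo n).
Hypothesis hi_super : forall n, (n0 <= n)%nat -> f (hi n) <= hi (S n).
Hypothesis lo_ge1 : forall n, (n0 <= n)%nat -> 1 <= lo n.
Hypothesis base : lo n0 <= b n0 <= hi n0.

Lemma iter_between_sub_super n : (n0 <= n)%nat -> lo n <= b n <= hi n.
Proof.
  intro Hn; induction Hn as [|n Hn [IHlo IHhi]]; [exact base|].
  pose proof (lo_ge1 n Hn).
  rewrite (b_rec n Hn); split.
  - apply Rle_trans with (f (lo n)); [apply lo_sub | apply f_mono]; auto.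
  - apply Rle_trans with (f (hi n)); [apply f_mono | apply hi_super]; auto; lra.
Qed.

End Comparison.

Lemma a_seq_SS n : a_seq (S (S n)) = a_seq (S n) + / a_seq (S n).
Proof. reflexivity. Qed.

Lemma a_seq_ge1 n : 1 <= a_seq n.
Proof.
  induction n as [|[|n] IH]; [simpl; lra | simpl; lra |].
  rewrite a_seq_SS.
  assert (0 < / a_seq (S n)) by (apply Rinv_0_lt_compat; lra).
  lra.
Qed.

Lemma a_seq_sqr_SS n : a_seq (S (S n)) ^ 2 = sqr_step (a_seq (S n) ^ 2).
Proof.
  rewrite a_seq_SS; unfold sqr_step.
  pose proof (a_seq_ge1 (S n)). field. lra.
Qed.

Lemma a_seq_sqr_3 : a_seq 3 ^ 2 = 841 / 100.
Proof. simpl. field. Qed.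

Lemma a_seq_sqr_between m :
  (3 <= m)%nat ->
  sqr_lower (INR m) <= a_seq m ^ 2 <= sqr_upper (INR m).
Proof.
  apply (iter_between_sub_super sqr_step (fun n => a_seq n ^ 2)
           (fun n => sqr_lower (INR n)) (fun n => sqr_upper (INR n)) 3).
  - exact sqr_step_le.
  - intros [|n] Hn; [lia | apply a_seq_sqr_SS].
  - intros n Hn; rewrite S_INR; apply sqr_lower_sub.
    apply lt_0_INR; lia.
  - intros n Hn; rewrite S_INR; apply sqr_upper_super.
    apply le_INR in Hn; simpl in Hn; lra.
  - intros n Hn; unfold sqr_lower.
    apply le_INR in Hn; simpl in Hn.
    pose proof (sqrt_pos (INR n * (INR n + 1))); lra.
  - rewrite a_seq_sqr_3; unfold sqr_lower, sqr_upper.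
    replace (INR 3) with 3 by (simpl; lra).
    assert (sqrt (3 * (3 + 1)) <= 7 / 2).
    { rewrite <- (sqrt_pow2 (7 / 2)) by lra. apply sqrt_le_1_alt; lra. }
    assert (244 / 100 <= sqrt (2 * 3)).
    { rewrite <- (sqrt_pow2 (244 / 100)) by lra. apply sqrt_le_1_alt; lra. }
    lra.
Qed.

Theorem theorem3p10 (m : nat) (hm : (3 <= m)%nat) :
  sqrt (INR m + sqrt (INR m * (INR m + 1))) <= a_seq m /\
  a_seq m <= sqrt (2 * INR m + sqrt (2 * INR m)).
Proof.
  destruct (a_seq_sqr_between m hm) as [Hlo Hhi].
  pose proof (a_seq_ge1 m) as Ha.
  split; rewrite <- (sqrt_pow2 (a_seq m)) by lra; now apply sqrt_le_1_alt.
Qed.
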